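(* Let $\lambda$ be an infinite cardinal and $k\ge 2$. A mutually algebraic subset $Y\subseteq\lambda^k$ is monadically definable if and only if $Y\setminus\Delta_k$ is finite, where $\Delta_k=\{(a,\dots,a)\in\lambda^k:a\in\lambda\}$.
   Context: $Y\subseteq\lambda^k$ is mutually algebraic if there is an integer $m$ such that for every $a\in\lambda$ the set $\{\bar a\in Y: a \text{ is a coordinate of } \bar a\}$ has size at most $m$. $Y\subseteq\lambda^k$ is monadically definable if it is definable (with parameters) in some structure $(\lambda,U_1,\dots,U_n)$ with $U_i$ unary predicates. *)

From mathcomp Require Import all_boot.
From Stdlib Require Import List.

Set Implicit Arguments.
Unset Strict Implicit.
Unset Printing Implicit Defensive.

Definition infinite_type (T : Type) : Prop :=
  ~ exists s : list T, forall x : T, In x s.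

Definition tuple_set (T : Type) (k : nat) := ('I_k -> T) -> Prop.

Definition card_le (A : Type) (S : A -> Prop) (m : nat) : Prop :=
  exists s : list A, (length s <= m)%coq_nat /\ forall y, S y -> In y s.

Definition finite_set (A : Type) (S : A -> Prop) : Prop :=
  exists s : list A, forall y, S y -> In y s.

Definition mutually_algebraic (T : Type) (k : nat) (Y : tuple_set T k) : Prop :=
  exists m : nat, forall a : T,
    card_le (fun y : 'I_k -> T => Y y /\ exists i : 'I_k, y i = a) m.

Definition diagonal (T : Type) (k : nat) : tuple_set T k :=
  fun y => exists a : T, forall i : 'I_k, y i = a.

Inductive formula (n : nat) : Type :=
| FEq : nat -> nat -> formula n
| FPred : 'I_n -> nat -> formula n
| FNot : formula n -> formula n
| FAnd : formula n -> formula n -> formula n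
| FExists : nat -> formula n -> formula n.

Definition update (T : Type) (e : nat -> T) (v : nat) (t : T) : nat -> T :=
  fun w => if w == v then t else e w.

Fixpoint sat (T : Type) (n : nat) (U : 'I_n -> T -> Prop) (e : nat -> T)
    (phi : formula n) : Prop :=
  match phi with
  | FEq v w => e v = e w
  | FPred j v => U j (e v)
  | FNot psi => ~ sat U e psi
  | FAnd psi chi => sat U e psi /\ sat U e chi
  | FExists v psi => exists t : T, sat U (update e v t) psi
  end.

(* Assignment: variables 0..k-1 get the tuple x, variables >= k get parameters p. *)
Definition tuple_env (T : Type) (k : nat) (x : 'I_k -> T) (p : nat -> T) : nat -> T :=
  fun v => match @insub nat (fun i => i < k) 'I_k v with
           | Some j => x j
           | None => p v
           end.

Definition monadically_definable (T : Type) (k : nat) (Y : tuple_set T k) : Prop :=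
  exists (n : nat) (U : 'I_n -> T -> Prop) (phi : formula n) (p : nat -> T),
    forall x : 'I_k -> T, Y x <-> sat U (tuple_env x p) phi.

(* (=>) Suppose Y is defined by phi with parameters in (T, U_0, ..., U_(n-1)).
   Call two elements of T of the same cell when they lie in the same U_j's.
   A transposition of two elements of one cell, both distinct from the
   finitely many parameters occurring in phi, is an automorphism fixing the
   parameters, so it preserves Y.  If y in Y is not constant, y i <> y j,
   and y j is not a parameter, then transposing y j with the other members
   of its cell yields tuples of Y that all contain y i; mutual algebraicity
   bounds their number, so the cell of y j is finite.  Since there are only
   2^n cells, all coordinates of non-constant tuples of Y lie in a fixed
   finite set, and there are finitely many such tuples.

   (<=) If Y minus the diagonal is listed as t_0, ..., t_(r-1), take the
   single predicate U_0 = {a | (a, ..., a) in Y} and the coordinates of the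
   t_j as parameters; Y is defined by
     (x_0 = ... = x_(k-1) /\ U_0 x_0) \/ \/_j (x = t_j).

   Infinitude of T is only used to obtain an element of T, and mutual
   algebraicity only in the direction (=>). *)

From mathcomp Require Import all_boot.
From Stdlib Require Import List Classical ClassicalEpsilon FunctionalExtensionality.

Set Implicit Arguments.
Unset Strict Implicit.
Unset Printing Implicit Defensive.

Lemma infinite_type_inhabited (T : Type) : infinite_type T -> inhabited T.
Proof.
move=> Tinf; apply: NNPP => Tempty; apply: Tinf.
by exists nil => x; apply: Tempty; exists.
Qed.

Lemma finite_set_exact (A : Type) (S : A -> Prop) :
  finite_set S -> exists s, forall y, S y <-> In y s.
Proof.
move=> [s Ss].
suff [s' Es'] : exists s', forall y, S y /\ In y s <-> In y s'.
  by exists s' => y; rewrite -Es'; split=> [Sy|[]//]; split=> //; apply: Ss.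
clear Ss; elim: s => [|a s [s' Es']]; first by exists nil => y; split=> [[]|].
have [Sa|nSa] := classic (S a).
- exists (a :: s') => y /=; rewrite -Es'.
  by split=> [[Sy [<-|]]|[<-|[]]]; auto.
- exists s' => y /=; rewrite -Es'.
  by split=> [[Sy [E|]]|[]]; [subst|split|]; auto.
Qed.

Lemma mem_In (A : eqType) (x : A) (s : list A) : x \in s -> In x s.
Proof. by elim: s => //= a s IH; rewrite inE => /orP [/eqP ->|/IH]; auto. Qed.

Fixpoint words (T : Type) (F : list T) (k : nat) : list (list T) :=
  if k is k'.+1 then flat_map (fun a => List.map (cons a) (words F k')) F
  else nil :: nil.

Lemma words_complete (T : Type) (F : list T) (l : list T) :
  (forall a, In a l -> In a F) -> In l (words F (size l)).
Proof.
elim: l => [|a l IH] lF /=; first by left.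
apply/in_flat_map; exists a; split; first by apply: lF; left.
by apply/in_map; apply: IH => b lb; apply: lF; right.
Qed.

(* Over a finite set F there are finitely many k-tuples: a tuple is
   recovered from the word of its coordinates. *)
Lemma finite_tuples_over (T : Type) (k : nat) (F : list T) :
  inhabited T -> finite_set (fun x : 'I_k -> T => forall i, In (x i) F).
Proof.
move=> [d]; exists (List.map (fun l (i : 'I_k) => seq.nth d l i) (words F k)).
move=> x xF; apply/in_map_iff; exists (seq.map x (enum 'I_k)); split.
  apply: functional_extensionality => i.
  by rewrite (nth_map i) ?size_enum_ord ?nth_ord_enum.
rewrite -[X in words F X](size_enum_ord k) -(size_map x).
apply: words_complete => a /in_map_iff [i [<- _]]; exact: xF.
Qed.

Lemma tuple_env_ord (T : Type) (k : nat) (x : 'I_k -> T) p (i : 'I_k) :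
  tuple_env x p i = x i.
Proof.
by rewrite /tuple_env; case: insubP => [j _ /val_inj ->|]; rewrite ?ltn_ord.
Qed.

Lemma tuple_env_param (T : Type) (k : nat) (x : 'I_k -> T) p v :
  k <= v -> tuple_env x p v = p v.
Proof. by move=> kv; rewrite /tuple_env; case: insubP => // j; rewrite ltnNge kv. Qed.

Fixpoint vars (n : nat) (f : formula n) : list nat :=
  match f with
  | FEq v w => v :: w :: nil
  | FPred _ v => v :: nil
  | FNot g => vars g
  | FAnd g h => vars g ++ vars h
  | FExists v g => v :: vars g
  end.

(* Satisfaction is invariant under a bijection s of T preserving every U_j:
   if e' agrees with s o e on the variables of f, then e and e' satisfy the
   same formulas.  (The induction needs arbitrary pairs e, e'.) *)
Lemma sat_automorphism (T : Type) (n : nat) (U : 'I_n -> T -> Prop)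
    (s s' : T -> T) :
  cancel s' s -> cancel s s' -> (forall j x, U j (s x) <-> U j x) ->
  forall (f : formula n) (e e' : nat -> T),
  (forall v, In v (vars f) -> e' v = s (e v)) -> (sat U e f <-> sat U e' f).
Proof.
move=> s'K sK sU; elim=> [v w|j v|g IH|g IHg h IHh|v g IH] e e' ee' /=.
- rewrite !ee' /=; auto; split=> [->//|]; exact: (can_inj sK).
- by rewrite ee' /=; auto; rewrite sU.
- by rewrite (IH e e').
- by rewrite (IHg e e') ?(IHh e e') // => w wf; apply: ee'; apply: in_or_app; auto.
- have upd t w : In w (vars g) ->
      update e' v (s t) w = s (update e v t w).
    by rewrite /update; case: eqP => // _ wg; apply: ee'; right.
  split=> [[t gt]|[t gt]].
  + by exists (s t); apply/(IH _ _ (upd t)).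
  + by exists (s' t); apply/(IH _ _ (upd (s' t))); rewrite s'K.
Qed.

Definition transposition (T : Type) (a c x : T) : T :=
  if excluded_middle_informative (x = a) then c
  else if excluded_middle_informative (x = c) then a else x.

Lemma transpositionP (T : Type) (a c x : T) (P : T -> Prop) :
  (x = a -> P c) -> (x <> a -> x = c -> P a) -> (x <> a -> x <> c -> P x) ->
  P (transposition a c x).
Proof.
rewrite /transposition => xa xc xo.
case: (excluded_middle_informative (x = a)) => [|nxa]; first exact: xa.
by case: (excluded_middle_informative (x = c)); auto.
Qed.

Lemma transposition_left (T : Type) (a c : T) : transposition a c a = c.
Proof. by apply: (transpositionP (P := eq^~ c)). Qed.

Lemma transposition_fix (T : Type) (a c x : T) :
  x <> a -> x <> c -> transposition a c x = x.
Proof. by move=> xa xc; apply: (transpositionP (P := eq^~ x)). Qed.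

Lemma transposition_involutive (T : Type) (a c : T) :
  involutive (transposition a c).
Proof.
move=> x; apply: (transpositionP (P := fun y => transposition a c y = x)).
- by move=> ->; apply: (transpositionP (P := eq^~ a)).
- by move=> _ ->; rewrite transposition_left.
- exact: transposition_fix.
Qed.

Definition cell (T : Type) (n : nat) (U : 'I_n -> T -> Prop) (x : T)
    : {ffun 'I_n -> bool} :=
  [ffun j => if excluded_middle_informative (U j x) then true else false].

Lemma cell_eqP (T : Type) (n : nat) (U : 'I_n -> T -> Prop) (a c : T) :
  cell U a = cell U c -> forall j, U j a <-> U j c.
Proof.
move=> /ffunP /(_ _) acE j; move: (acE j); rewrite !ffunE.
by do 2 case: excluded_middle_informative; try tauto.
Qed.

Lemma transposition_preserves_cells (T : Type) (n : nat)
    (U : 'I_n -> T -> Prop) (a c : T) :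
  cell U a = cell U c -> forall j x, U j (transposition a c x) <-> U j x.
Proof.
move=> ac j x; have acU := cell_eqP ac.
by apply: (transpositionP (P := fun y => U j y <-> U j x)) => [->|_ ->|]; rewrite ?acU.
Qed.

(* As there are only 2^n cells, the union of the finite ones is finite. *)
Lemma finite_cells_covered (T : Type) (n : nat) (U : 'I_n -> T -> Prop) :
  exists F : list T,
    forall x, finite_set (fun c => cell U c = cell U x) -> In x F.
Proof.
suff cover : forall ts : list {ffun 'I_n -> bool}, exists F, forall x,
    cell U x \in ts -> finite_set (fun c => cell U c = cell U x) -> In x F.
  have [F FP] := cover (enum {ffun 'I_n -> bool}).
  by exists F => x; apply: FP; rewrite mem_enum.
elim=> [|t ts [F FP]]; first by exists nil.
have [[s sP]|tinf] := classic (finite_set (fun c => cell U c = t)).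
- exists (s ++ F) => x; rewrite inE => /orP [/eqP xt|xts] xfin; apply: in_or_app.
  + by left; apply: sP.
  + by right; apply: FP.
- exists F => x; rewrite inE => /orP [/eqP xt|xts] xfin; last exact: FP.
  by case: tinf; rewrite -xt.
Qed.

Section DefinableImpliesFinite.

Variables (T : Type) (k : nat) (Y : tuple_set T k) (m : nat).
Hypothesis Y_bounded :
  forall a : T, card_le (fun y : 'I_k -> T => Y y /\ exists i, y i = a) m.
Variables (n : nat) (U : 'I_n -> T -> Prop) (phi : formula n) (p : nat -> T).
Hypothesis Y_defined : forall x, Y x <-> sat U (tuple_env x p) phi.

Let params : list T := List.map p (vars phi).

Lemma Y_transposition_closed (a c : T) (y : 'I_k -> T) :
  cell U a = cell U c -> ~ In a params -> ~ In c params ->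
  Y y -> Y (fun i => transposition a c (y i)).
Proof.
move=> ac anp cnp; rewrite !Y_defined; have tK := transposition_involutive a c.
apply: (iffLR (sat_automorphism tK tK (transposition_preserves_cells ac) _)).
move=> v vphi; rewrite /tuple_env; case: insub => //.
by rewrite transposition_fix // => pE; [apply: anp|apply: cnp];
  rewrite -pE; apply: in_map.
Qed.

(* Each member c of
   the cell of y j (other than y i and the parameters) is the j-th
   coordinate of a tuple of Y containing y i. *)
Lemma coordinate_parameter_or_finite_cell (y : 'I_k -> T) (i j : 'I_k) :
  Y y -> y i <> y j ->
  In (y j) params \/ finite_set (fun c => cell U c = cell U (y j)).
Proof.
move=> Yy yij; have [|yjnp] := classic (In (y j) params); [by left|right].
have [s [_ sP]] := Y_bounded (y i).
exists (List.map (fun z => z j) s ++ params ++ y i :: nil) => c cE.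
have [cp|cnp] := classic (In c params).
  by apply: in_or_app; right; apply: in_or_app; left.
have [->|cyi] := classic (c = y i).
  by apply: in_or_app; right; apply: in_or_app; right; left.
apply/in_or_app; left; apply/in_map_iff.
exists (fun l => transposition (y j) c (y l)); split.
  exact: transposition_left.
apply: sP; split; first exact: Y_transposition_closed.
by exists i; rewrite transposition_fix // => yic; apply: cyi.
Qed.

Hypothesis T_inhabited : inhabited T.

(* Every coordinate of a non-constant tuple of Y lies in the finite set of
   parameters and finite cells, hence Y minus the diagonal is finite. *)
Lemma definable_finite_off_diagonal :
  finite_set (fun y : 'I_k -> T => Y y /\ ~ diagonal y).
Proof.
have [F FP] := finite_cells_covered U.
have [s sP] := finite_tuples_over k (params ++ F) T_inhabited.
exists s => y [Yy ynd]; apply: sP => j; apply: in_or_app.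
have [i yij] : exists i, y i <> y j.
  apply: NNPP => yconst; apply: ynd; exists (y j) => i.
  by apply: NNPP => yij; apply: yconst; exists i.
have [|] := coordinate_parameter_or_finite_cell Yy yij; first by left.
by right; apply: FP.
Qed.

End DefinableImpliesFinite.

Definition FTrue (n : nat) : formula n := FEq n 0 0.
Definition FOr (n : nat) (f g : formula n) : formula n :=
  FNot (FAnd (FNot f) (FNot g)).
Definition bigAnd (n : nat) (l : list (formula n)) : formula n :=
  fold_right (@FAnd n) (FTrue n) l.
Definition bigOr (n : nat) (l : list (formula n)) : formula n :=
  fold_right (@FOr n) (FNot (FTrue n)) l.

Section Connectives.

Variables (T : Type) (n : nat) (U : 'I_n -> T -> Prop) (e : nat -> T).

Lemma sat_FOr (f g : formula n) : sat U e (FOr f g) <-> sat U e f \/ sat U e g.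
Proof. by split=> /= [fg|]; [apply: NNPP => nfg; apply: fg|]; tauto. Qed.

Lemma sat_bigAnd (I : Type) (f : I -> formula n) (l : list I) :
  sat U e (bigAnd (List.map f l)) <-> forall a, In a l -> sat U e (f a).
Proof.
elim: l => [|a l IH] /=; first by split=> // _ b [].
by rewrite IH; split=> [[fa fl] b [<-|]|fl]; auto.
Qed.

Lemma sat_bigOr (I : Type) (f : I -> formula n) (l : list I) :
  sat U e (bigOr (List.map f l)) <-> exists a, In a l /\ sat U e (f a).
Proof.
elim: l => [|a l IH]; first by split=> [/= []//|[b [[] _]]].
rewrite [bigOr _]/= sat_FOr IH.
split=> [[fa|[b [lb fb]]]|[b [[<-|lb] fb]]]; first by exists a; split; [left|].
- by exists b; split; [right|].
- by left.
- by right; exists b.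
Qed.

Lemma sat_bigAnd_ord (r : nat) (f : 'I_r -> formula n) :
  sat U e (bigAnd (List.map f (enum 'I_r))) <-> forall i, sat U e (f i).
Proof.
by rewrite sat_bigAnd; split=> [fs i|fs i _]; [apply: fs; apply: mem_In; rewrite mem_enum|].
Qed.

Lemma sat_bigOr_ord (r : nat) (f : 'I_r -> formula n) :
  sat U e (bigOr (List.map f (enum 'I_r))) <-> exists i, sat U e (f i).
Proof.
rewrite sat_bigOr; split=> [[i [_ fi]]|[i fi]]; exists i => //.
by split=> //; apply: mem_In; rewrite mem_enum.
Qed.

End Connectives.

Section FiniteImpliesDefinable.

Variables (T : Type) (k : nat) (Y : tuple_set T k).
Variables (d : T) (s : list ('I_k -> T)).
Hypothesis s_lists : forall y, Y y /\ ~ diagonal y <-> In y s.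
Hypothesis k_pos : 0 < k.

Let i0 : 'I_k := Ordinal k_pos.
Let dflt : 'I_k -> T := fun _ => d.

(* Parameter number k + (j * k + i) is the i-th coordinate of the j-th
   listed tuple. *)
Definition param_var (j : nat) (i : 'I_k) : nat := k + (j * k + i).

Definition listed_params (v : nat) : T :=
  List.nth ((v - k) %/ k) s dflt (insubd i0 ((v - k) %% k)).

Lemma listed_paramsE (x : 'I_k -> T) (j : nat) (i : 'I_k) :
  tuple_env x listed_params (param_var j i) = List.nth j s dflt i.
Proof.
rewrite tuple_env_param ?leq_addr // /listed_params addKn.
by rewrite divnMDl // divn_small // modnMDl modn_small // addn0 valKd.
Qed.

Let U : 'I_1 -> T -> Prop := fun _ a => Y (fun _ => a).

Definition equals_listed (j : nat) : formula 1 :=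
  bigAnd (List.map (fun i : 'I_k => FEq 1 i (param_var j i)) (enum 'I_k)).

Lemma sat_equals_listed (x : 'I_k -> T) (j : nat) :
  sat U (tuple_env x listed_params) (equals_listed j) <-> x = List.nth j s dflt.
Proof.
rewrite sat_bigAnd_ord; split=> [xj|-> i /=]; last first.
  by rewrite tuple_env_ord listed_paramsE.
apply: functional_extensionality => i.
by rewrite -(listed_paramsE x) -(tuple_env_ord x listed_params); apply: xj.
Qed.

Definition diagonal_formula : formula 1 :=
  FAnd (bigAnd (List.map (fun i : 'I_k => FEq 1 i 0) (enum 'I_k))) (FPred ord0 0).

Lemma sat_diagonal_formula (x : 'I_k -> T) :
  sat U (tuple_env x listed_params) diagonal_formula <-> diagonal x /\ Y x.
Proof.
have x0 : tuple_env x listed_params 0 = x i0 := tuple_env_ord x listed_params i0.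
rewrite [sat _ _ _]/= sat_bigAnd_ord x0; split.
- move=> [xconst Yx0]; have xE : x = fun _ => x i0.
    by apply: functional_extensionality => i; move: (xconst i); rewrite /= tuple_env_ord x0.
  by split; [exists (x i0) => i; rewrite {1}xE|rewrite {1}xE].
- move=> [[a xa] Yx]; split=> [i /=|]; first by rewrite tuple_env_ord x0 !xa.
  rewrite /U; suff <- : x = (fun _ => x i0) by [].
  by apply: functional_extensionality => i; rewrite !xa.
Qed.

Definition defining_formula : formula 1 :=
  FOr diagonal_formula
    (bigOr (List.map (fun j : 'I_(size s) => equals_listed j) (enum 'I_(size s)))).

Lemma defining_formulaP (x : 'I_k -> T) :
  Y x <-> sat U (tuple_env x listed_params) defining_formula.
Proof.
rewrite sat_FOr sat_diagonal_formula sat_bigOr_ord.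
split=> [Yx|[[_ Yx]//|[j /sat_equals_listed ->]]].
- have [xdiag|xnd] := classic (diagonal x); first by left.
  right; have [j [/ltP js xj]] := In_nth s x dflt (proj1 (s_lists x) (conj Yx xnd)).
  by exists (Ordinal js); apply/sat_equals_listed.
- have /s_lists [] // : In (List.nth j s dflt) s.
  by apply: nth_In; apply/ltP.
Qed.

End FiniteImpliesDefinable.

Lemma finite_off_diagonal_definable (T : Type) (k : nat) (Y : tuple_set T k) :
  inhabited T -> 0 < k ->
  finite_set (fun y : 'I_k -> T => Y y /\ ~ diagonal y) -> monadically_definable Y.
Proof.
move=> [d] k_pos /finite_set_exact [s s_lists].
exists 1, (fun _ a => Y (fun _ => a)), (defining_formula s), (listed_params d s k_pos).
exact: defining_formulaP.
Qed.

Theorem lemma4p3 (T : Type) (k : nat) (Y : tuple_set T k) :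
  infinite_type T -> 2 <= k -> mutually_algebraic Y ->
  (monadically_definable Y <->
   finite_set (fun y : 'I_k -> T => Y y /\ ~ diagonal y)).
Proof.
move=> Tinf k2 [m Y_bounded]; have T_inh := infinite_type_inhabited Tinf.
split=> [[n [U [phi [p Y_defined]]]]|].
- exact: definable_finite_off_diagonal Y_bounded _ _ _ _ Y_defined T_inh.
- exact: finite_off_diagonal_definable (ltnW k2).
Qed.
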